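(* Let $\mathcal{Z}=\mathcal{X}\times\mathcal{Y}$ with a probability distribution, let $\mathcal{H}$ be a class of bounded real-valued functions $h:\mathcal{X}\times\mathcal{X}\to\mathbb{R}$, let $Y:\mathcal{Y}\times\mathcal{Y}\to\mathbb{R}$ be either $Y(y,y')=y-y'$ or $Y(y,y')=yy'$, with $Y:=\sup_{y,y'\in\mathcal{Y}}|Y(y,y')|<\infty$, and let $\phi:\mathbb{R}\to\mathbb{R}$ be $L$-Lipschitz. Define the loss $\ell(h,z,z')=\phi(h(x,x')Y(y,y'))$ for $z=(x,y),z'=(x',y')$. Then \[ \mathcal{R}_n(\ell\circ\mathcal{H})\le LY\,\mathcal{R}_n(\mathcal{H}). \]
   Context: $\ell\circ\mathcal{H}=\{(z,z')\mapsto\ell(h,z,z'):h\in\mathcal{H}\}$. For a class $\mathcal{G}$ of functions of pairs, $\mathcal{R}_n(\mathcal{G})=\mathbb{E}\left[\sup_{g\in\mathcal{G}}\frac1n\sum_{i=1}^n\epsilon_i g(z,z_i)\right]$, the expectation over i.i.d. Rademacher signs $\epsilon_i$ and i.i.d. $z,z_1,\dots,z_n$ from the distribution; for $\mathcal{H}$, $h(z,z_i)$ means $h(x,x_i)$. *)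

From HB Require Import structures.
From mathcomp Require Import all_boot all_order all_algebra.
From mathcomp Require Import all_classical all_reals all_analysis.
Set Implicit Arguments. Unset Strict Implicit. Unset Printing Implicit Defensive.
Import Order.TTheory GRing.Theory Num.Theory.
Local Open Scope classical_set_scope.
Local Open Scope ring_scope.
Local Open Scope ereal_scope.

(* Expectation of F (z_0, ..., z_{k-1}) where z_0, ..., z_{k-1} are i.i.d.
   with law P, written as the iterated integral over the k coordinates. *)
Fixpoint iid_expect (d : measure_display) (T : measurableType d) (R : realType)
    (P : probability T R) (k : nat) (F : seq T -> \bar R) : \bar R :=
  match k with
  | 0%N => F [::]
  | k.+1 => \int[P]_z iid_expect P k (fun s => F (z :: s))
  end.

Definition rsign (R : realType) (b : bool) : R := if b then 1%R else (-1)%R.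

(* Empirical (conditional) Rademacher average:
   E_eps [ sup_{g in G} (1/n) sum_i eps_i g(z, z_i) ],
   the expectation over i.i.d. uniform signs written as the finite average
   over {-1,1}^n. *)
Definition rad_avg (T : Type) (R : realType) (n : nat)
    (G : set (T -> T -> R)) (z : T) (zs : 'I_n -> T) : \bar R :=
  ((2 ^+ n)^-1)%:E *
  \sum_(eps : {ffun 'I_n -> bool})
     ereal_sup [set ((n%:R)^-1 * \sum_(i < n) rsign R (eps i) * g z (zs i))%:E
               | g in G].

(* Rademacher complexity R_n(G) = E_{eps, z, z_1..z_n}[ sup_g (1/n) sum_i eps_i g(z,z_i) ]
   with z, z_1, ..., z_n i.i.d. from P. *)
Definition rademacher (d : measure_display) (T : measurableType d) (R : realType)
    (P : probability T R) (n : nat) (G : set (T -> T -> R)) : \bar R :=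
  iid_expect P n.+1 (fun s =>
    @rad_avg T R n G (head (point : T) s)
      (fun i : 'I_n => nth (point : T) (behead s) i)).

Definition Ybound (Yt : Type) (R : realType) (lab : Yt -> R) (Yop : R -> R -> R)
  : \bar R :=
  ereal_sup [set r : \bar R | exists y y' : Yt, r = (`|Yop (lab y) (lab y')|)%:E].

(* The contraction
   principle of Ledoux and Talagrand replaces the values
   phi (h(x, x_i) Y(y, y_i)) by L Y h(x, x_i) one coordinate at a time:
   pairing each sign vector with the one flipped at coordinate i, the sum of
   the two suprema only grows, because
   |phi (a Y(y, y_i)) - phi (b Y(y, y_i))| <= L Y |a - b|.
   Integrating this pointwise bound over the i.i.d. sample gives the claim.
   The integrands are not known to be measurable, so integrals are only
   compared for nonnegative integrands, where monotonicity holds by the very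
   definition of the integral; the averages are nonnegative by the symmetry
   of the signs. *)

From HB Require Import structures.
From mathcomp Require Import all_boot all_order all_algebra.
From mathcomp Require Import all_classical all_reals all_analysis.
From mathcomp Require Import lra.
Set Implicit Arguments. Unset Strict Implicit. Unset Printing Implicit Defensive.
Import Order.TTheory GRing.Theory Num.Theory.
Local Open Scope classical_set_scope.
Local Open Scope ring_scope.
Local Open Scope ereal_scope.

Section NonnegIntegral.
Context d (T : measurableType d) (R : realType) (mu : {measure set T -> \bar R}).
Import HBNNSimple.

Lemma le_ge0_integral (f g : T -> \bar R) :
  (forall x, 0 <= f x) -> (forall x, f x <= g x) ->
  \int[mu]_x f x <= \int[mu]_x g x.
Proof.
move=> f0 fg; have g0 x : 0 <= g x by apply: le_trans (f0 x) (fg x).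
rewrite !ge0_integralTE//; apply: ereal_sup_le => _ [h /= hf <-].
by exists h => //= x; apply: le_trans (hf x) (fg x).
Qed.

Lemma ge0_integralZl_le (f : T -> \bar R) (c : R) :
  (0 < c)%R -> (forall x, 0 <= f x) ->
  \int[mu]_x (c%:E * f x) <= c%:E * \int[mu]_x f x.
Proof.
move=> c0 f0; have cf0 x : 0 <= c%:E * f x by rewrite mule_ge0// lee_fin ltW.
rewrite !ge0_integralTE//; apply: ge_ereal_sup => _ [h /= hf <-].
have c1_ge0 : (0 <= c^-1)%R by rewrite invr_ge0 ltW.
pose h' := scale_nnsfun h c1_ge0.
have -> : sintegral mu h = c%:E * sintegral mu h'.
  by rewrite sintegralrM muleA -EFinM divff ?mul1e ?gt_eqF.
rewrite lee_pmul2l//; apply: ereal_sup_ubound; exists h' => //= x.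
rewrite -(@lee_pmul2l _ c%:E) ?lte_fin// -EFinM mulrA divff ?gt_eqF//.
by rewrite mul1r hf.
Qed.

End NonnegIntegral.

Section IidExpect.
Context d (T : measurableType d) (R : realType) (P : probability T R).

Lemma iid_expect_ge0 k (F : seq T -> \bar R) :
  (forall s, 0 <= F s) -> 0 <= iid_expect P k F.
Proof.
elim: k F => [|k IH] F F0 /=; first exact: F0.
by apply: integral_ge0 => z _; apply: IH.
Qed.

Lemma iid_expect_cstNy k : iid_expect P k (fun _ => -oo) = -oo.
Proof.
elim: k => [//|k IH] /=; rewrite IH.
have := integral_cst P measurableT -oo; rewrite /cst => ->.
by rewrite [X in _ * X]probability_setT mule1.
Qed.

Lemma le_iid_expectZ k (F G : seq T -> \bar R) (c : R) : (0 <= c)%R ->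
  (forall s, 0 <= F s) -> (forall s, 0 <= G s) ->
  (forall s, F s <= c%:E * G s) -> iid_expect P k F <= c%:E * iid_expect P k G.
Proof.
move=> c0; elim: k F G => [|k IH] F G F0 G0 FG /=; first exact: FG.
apply: (@le_trans _ _ (\int[P]_z (c%:E * iid_expect P k (fun s => G (z :: s))))).
  apply: le_ge0_integral => z; first exact: iid_expect_ge0.
  exact: IH.
have [->|c_neq0] := eqVneq c 0%R.
  by rewrite mul0e; under eq_integral do rewrite mul0e; rewrite integral0.
by apply: ge0_integralZl_le; [rewrite lt0r c_neq0|move=> z; apply: iid_expect_ge0].
Qed.

End IidExpect.

Lemma ereal_sup_image_addr_le (R : realType) A (S : set A) (f g : A -> R)
    (z : \bar R) :
  (forall a b, S a -> S b -> (f a + g b)%:E <= z) ->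
  ereal_sup [set (f a)%:E | a in S] + ereal_sup [set (g b)%:E | b in S] <= z.
Proof.
have [[a0 Sa0]|/set0P/negP/negPn/eqP->] := pselect (S !=set0); last first.
  by rewrite !image_set0 ereal_sup0 addNye leNye.
case: z => [r| |] fg; [|exact: leey|by have := fg a0 a0 Sa0 Sa0].
have sup_f_le b : S b -> ereal_sup [set (f a)%:E | a in S] <= (r - g b)%:E.
  move=> Sb; apply: ge_ereal_sup => _ [a Sa <-]; rewrite lee_fin lerBrDr.
  by have := fg a b Sa Sb; rewrite lee_fin.
have sup_f_fin : ereal_sup [set (f a)%:E | a in S] \is a fin_num.
  rewrite fin_numE; apply/andP; split.
    rewrite -ltNye; apply: (@lt_le_trans _ _ (f a0)%:E); first exact: ltNyr.
    by apply: ereal_sup_ubound; exists a0.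
  by rewrite -ltey; apply: (@le_lt_trans _ _ (r - g a0)%:E); [exact: sup_f_le|exact: ltry].
rewrite addeC -leeBrDr//; apply: ge_ereal_sup => _ [b Sb <-].
by rewrite leeBrDr// addeC -leeBrDr// -EFinB; exact: sup_f_le.
Qed.

Lemma lee_double (R : realType) (x y : \bar R) : x + x <= y + y -> x <= y.
Proof.
case: x => [x| |]; case: y => [y| |] //=; rewrite ?lee_fin ?leey ?leNye//.
by move=> h; lra.
Qed.

Lemma rsign_negb (R : realType) b : (rsign R (~~ b) = - rsign R b)%R.
Proof. by case: b; rewrite /= ?opprK. Qed.

Lemma normr_rsign (R : realType) b : (`|rsign R b| = 1)%R.
Proof. by case: b; rewrite /= ?normrN normr1. Qed.

Definition flip_at n (j : 'I_n) (e : {ffun 'I_n -> bool}) : {ffun 'I_n -> bool} :=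
  [ffun i => if i == j then ~~ e i else e i].

Lemma flip_atK n (j : 'I_n) : involutive (flip_at j).
Proof.
by move=> e; apply/ffunP => i; rewrite !ffunE; case: eqP => // _; rewrite negbK.
Qed.

Definition negate_signs n (e : {ffun 'I_n -> bool}) : {ffun 'I_n -> bool} :=
  [ffun i => ~~ e i].

Lemma negate_signsK n : involutive (@negate_signs n).
Proof. by move=> e; apply/ffunP => i; rewrite !ffunE negbK. Qed.

Section SignSuprema.
Variables (R : realType) (A : Type) (n : nat) (S : set A) (w : R).
Hypothesis w_ge0 : (0 <= w)%R.

Definition sign_sup (U : 'I_n -> A -> R) (e : {ffun 'I_n -> bool}) : \bar R :=
  ereal_sup [set (w * \sum_(i < n) rsign R (e i) * U i a)%:E | a in S].

Lemma sign_sup_gtNy U e : S !=set0 -> -oo < sign_sup U e.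
Proof.
case=> a Sa; apply: (@lt_le_trans _ _ (w * \sum_(i < n) rsign R (e i) * U i a)%:E).
  exact: ltNyr.
by apply: ereal_sup_ubound; exists a.
Qed.

Lemma sum_sign_sup_ge0 U : S !=set0 -> 0 <= \sum_e sign_sup U e.
Proof.
case=> a Sa.
pose F (e : {ffun 'I_n -> bool}) := (w * \sum_(i < n) rsign R (e i) * U i a)%R.
have sumF_opp : (\sum_e F e = - \sum_e F e)%R.
  rewrite [in LHS](reindex_inj (can_inj (@negate_signsK n))) /= -sumrN.
  apply: eq_bigr => e _; rewrite /F -mulrN -sumrN; congr (_ * _)%R.
  by apply: eq_bigr => i _; rewrite ffunE rsign_negb mulNr.
have sumF0 : (\sum_e F e = 0)%R.
  by move/eqP: sumF_opp; rewrite -subr_eq0 opprK -mulr2n mulrn_eq0 => /eqP.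
apply: (@le_trans _ _ (\sum_e (F e)%:E)); first by rewrite sumEFin sumF0.
by apply: lee_sum => e _; apply: ereal_sup_ubound; exists a.
Qed.

Lemma sign_supZ_le (K : R) (V : 'I_n -> A -> R) e : (0 <= K)%R ->
  sign_sup (fun i a => K * V i a)%R e <= K%:E * sign_sup V e.
Proof.
move=> K0; apply: ge_ereal_sup => _ [a Sa <-].
rewrite (_ : (w * _)%R = K * (w * \sum_(i < n) rsign R (e i) * V i a))%R; last first.
  rewrite [RHS]mulrCA [in RHS]mulr_sumr; congr (_ * _)%R.
  by apply: eq_bigr => i _; rewrite mulrCA.
rewrite EFinM lee_wpmul2l ?lee_fin//.
by apply: ereal_sup_ubound; exists a.
Qed.

Section FlipCoordinate.
Variables (j : 'I_n) (U V : 'I_n -> A -> R).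
Hypothesis U_eq_V : forall i, i != j -> U i = V i.
Hypothesis contract_j : forall a b, S a -> S b -> (U j a - U j b <= `|V j a - V j b|)%R.

Lemma sign_sup_flip_pair_le e :
  sign_sup U e + sign_sup U (flip_at j e) <= sign_sup V e + sign_sup V (flip_at j e).
Proof.
pose s := rsign R (e j).
pose c a := (\sum_(i < n | i != j) rsign R (e i) * U i a)%R.
have sum_split W : (forall i, i != j -> W i = U i) -> forall a,
    (\sum_(i < n) rsign R (e i) * W i a = s * W j a + c a)%R.
  move=> WU a; rewrite (bigD1 j)//=; congr (_ + _)%R.
  by apply: eq_bigr => i ij; rewrite WU.
have sum_flip W : (forall i, i != j -> W i = U i) -> forall a,
    (\sum_(i < n) rsign R (flip_at j e i) * W i a = - (s * W j a) + c a)%R.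
  move=> WU a; rewrite (bigD1 j)//= ffunE eqxx rsign_negb mulNr; congr (_ + _)%R.
  by apply: eq_bigr => i ij; rewrite ffunE (negbTE ij) WU.
have VU i : i != j -> V i = U i by move=> /U_eq_V ->.
have supV a : S a -> (w * (s * V j a + c a))%:E <= sign_sup V e.
  by move=> Sa; apply: ereal_sup_ubound; exists a; rewrite ?sum_split.
have supV_flip a : S a -> (w * (- (s * V j a) + c a))%:E <= sign_sup V (flip_at j e).
  by move=> Sa; apply: ereal_sup_ubound; exists a; rewrite ?sum_flip.
have -> : sign_sup U e = ereal_sup [set (w * (s * U j a + c a))%:E | a in S].
  by congr ereal_sup; apply: eq_imagel => a _; rewrite sum_split.
have -> : sign_sup U (flip_at j e) =
    ereal_sup [set (w * (- (s * U j a) + c a))%:E | a in S].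
  by congr ereal_sup; apply: eq_imagel => a _; rewrite sum_flip.
apply: ereal_sup_image_addr_le => a b Sa Sb.
have Ujab : (s * (U j a - U j b) <= `|s * (V j a - V j b)|)%R.
  rewrite normrM normr_rsign mul1r /s; case: (e j) => /=; rewrite ?mul1r ?mulN1r.
    exact: contract_j.
  by rewrite opprB distrC contract_j.
have [Vjab|Vjab] := lerP 0 (s * (V j a - V j b))%R.
- apply: le_trans (leeD (supV a Sa) (supV_flip b Sb)).
  rewrite -EFinD lee_fin; rewrite ger0_norm// in Ujab.
  by have := ler_wpM2l w_ge0 Ujab; lra.
- apply: le_trans (leeD (supV b Sb) (supV_flip a Sa)).
  rewrite -EFinD lee_fin; rewrite ltr0_norm// in Ujab.
  by have := ler_wpM2l w_ge0 Ujab; lra.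
Qed.

Lemma sum_sign_sup_flip_le : \sum_e sign_sup U e <= \sum_e sign_sup V e.
Proof.
apply: lee_double.
rewrite [X in X + _ <= _](reindex_inj (can_inj (flip_atK j))) /=.
rewrite [X in _ <= X + _](reindex_inj (can_inj (flip_atK j))) /=.
rewrite -!big_split /=; apply: lee_sum => e _.
by rewrite [X in X <= _]addeC [X in _ <= X]addeC sign_sup_flip_pair_le.
Qed.

End FlipCoordinate.

Lemma sum_sign_sup_contraction (U V : 'I_n -> A -> R) :
  (forall j a b, S a -> S b -> (U j a - U j b <= `|V j a - V j b|)%R) ->
  \sum_e sign_sup U e <= \sum_e sign_sup V e.
Proof.
move=> UV.
pose W k := fun i : 'I_n => if (i < k)%N then V i else U i.
have W0 : W 0%N = U by [].
have Wn : W n = V by apply/funext => i; rewrite /W ltn_ord.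
suff W_incr k : (k <= n)%N -> \sum_e sign_sup U e <= \sum_e sign_sup (W k) e.
  by rewrite -Wn W_incr.
elim: k => [|k IH] kn; first by rewrite W0.
apply: (le_trans (IH (ltnW kn))); apply: (@sum_sign_sup_flip_le (Ordinal kn)).
  move=> i; rewrite -val_eqE /W /= => ik.
  by rewrite [in RHS]ltnS [in RHS]leq_eqVlt (negbTE ik).
by move=> a b Sa Sb; rewrite /W /= ltnn ltnSn UV.
Qed.

End SignSuprema.

Section RademacherContraction.
Variables (T : Type) (R : realType) (A : Type) (S : set A).

Lemma rad_avg_image n (F : A -> T -> T -> R) z zs :
  @rad_avg T R n [set F a | a in S] z zs =
  ((2 ^+ n)^-1)%:E * \sum_e sign_sup S n%:R^-1 (fun i a => F a z (zs i)) e.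
Proof.
rewrite /rad_avg /sign_sup; congr (_ * _); apply: eq_bigr => e _.
by rewrite image_comp.
Qed.

Lemma rad_avg_image_ge0 n (F : A -> T -> T -> R) z zs :
  S !=set0 -> 0 <= @rad_avg T R n [set F a | a in S] z zs.
Proof.
move=> S0; rewrite rad_avg_image mule_ge0 ?lee_fin ?invr_ge0 ?exprn_ge0//.
exact: sum_sign_sup_ge0.
Qed.

Lemma rad_avg_set0 n z zs : @rad_avg T R n set0 z zs = -oo.
Proof.
rewrite /rad_avg (bigD1 [ffun _ => true])//= image_set0 ereal_sup0 addNye.
by rewrite muleC gt0_mulNye// lte_fin invr_gt0 exprn_gt0.
Qed.

Variables (F G : A -> T -> T -> R) (K : R).
Hypothesis K_ge0 : (0 <= K)%R.
Hypothesis F_contract : forall a b z z', S a -> S b ->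
  (F a z z' - F b z z' <= K * `|G a z z' - G b z z'|)%R.

Lemma rad_avg_contraction n z zs : S !=set0 ->
  @rad_avg T R n [set F a | a in S] z zs <= K%:E * rad_avg [set G a | a in S] z zs.
Proof.
move=> S0; rewrite !rad_avg_image muleCA.
rewrite lee_wpmul2l ?lee_fin ?invr_ge0 ?exprn_ge0//.
rewrite fin_num_sume_distrr//; last first.
  by move=> e e' _ _; apply: ltninfty_adde_def; rewrite inE sign_sup_gtNy.
apply: (@le_trans _ _ (\sum_e sign_sup S n%:R^-1 (fun i a => K * G a z (zs i))%R e)); last first.
  by apply: lee_sum => e _; exact: sign_supZ_le.
apply: sum_sign_sup_contraction; first by rewrite invr_ge0.
move=> j a b Sa Sb /=; rewrite -mulrBr normrM (ger0_norm K_ge0).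
exact: F_contract.
Qed.

End RademacherContraction.

Section Rademacher.
Context d (T : measurableType d) (R : realType) (P : probability T R).

Lemma rademacher_set0 n : rademacher P n set0 = -oo.
Proof.
rewrite /rademacher (_ : (fun s => _) = fun _ => -oo) ?iid_expect_cstNy//.
by apply/funext => s; rewrite rad_avg_set0.
Qed.

Lemma rademacher_contraction n A (S : set A) (F G : A -> T -> T -> R) (K : R) :
  (0 <= K)%R ->
  (forall a b z z', S a -> S b ->
    (F a z z' - F b z z' <= K * `|G a z z' - G b z z'|)%R) ->
  rademacher P n [set F a | a in S] <= K%:E * rademacher P n [set G a | a in S].
Proof.
move=> K_ge0 F_contract.
have [S0|/set0P/negP/negPn/eqP->] := pselect (S !=set0); last first.
  by rewrite image_set0 rademacher_set0 leNye.
apply: le_iid_expectZ => // s; first exact: rad_avg_image_ge0.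
  exact: rad_avg_image_ge0.
exact: rad_avg_contraction.
Qed.

End Rademacher.

Theorem theorem7 (R : realType) (d1 d2 : measure_display)
  (X : measurableType d1) (Ylab : measurableType d2)
  (lab : Ylab -> R) (lab_inj : injective lab)
  (P : probability (X * Ylab)%type R)
  (H : set (X -> X -> R))
  (H_bdd : forall h, H h -> exists M : R, forall x x', (`|h x x'| <= M)%R)
  (Yop : R -> R -> R)
  (HYop : Yop = (fun y y' => y - y')%R \/ Yop = (fun y y' => y * y')%R)
  (Yfin : Ybound lab Yop
          < +oo)
  (phi : R -> R) (L : R)
  (phi_lip : forall a b, (`|phi a - phi b| <= L * `|a - b|)%R)
  (n : nat) :
  rademacher P n
    [set (fun z z' : X * Ylab => phi (h z.1 z'.1 * Yop (lab z.2) (lab z'.2))%R) | h in H]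
  <= L%:E * Ybound lab Yop
     * rademacher P n [set (fun z z' : X * Ylab => h z.1 z'.1) | h in H].
Proof.
have L_ge0 : (0 <= L)%R.
  by have := phi_lip 1%R 0%R; rewrite subr0 normr1 mulr1; apply: le_trans.
have Y_ub y y' : (`|Yop (lab y) (lab y')|)%:E <= Ybound lab Yop.
  by apply: ereal_sup_ubound; exists y, y'.
have Y_ge0 : 0 <= Ybound lab Yop by apply: le_trans (Y_ub point point).
have /fineK Y_fin : Ybound lab Yop \is a fin_num by rewrite ge0_fin_numE.
rewrite -Y_fin -EFinM.
apply: (@rademacher_contraction _ _ _ P n _ H
  (fun h z z' => phi (h z.1 z'.1 * Yop (lab z.2) (lab z'.2))%R)
  (fun h z z' => h z.1 z'.1)) => [|h h' z z' _ _].
  by rewrite mulr_ge0// -lee_fin Y_fin.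
apply: le_trans (ler_norm _) _; apply: le_trans (phi_lip _ _) _.
rewrite -mulrBl normrM -mulrA ler_wpM2l// mulrC ler_wpM2r//.
by rewrite -lee_fin Y_fin.
Qed.
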